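(* Consider an infinite balls-in-bins process with $d\ge2$ labeled bins: at each time $t=1,2,\ldots$ one ball is placed into a bin chosen uniformly at random from $\{1,\ldots,d\}$, independently over time, and $N^{(i)}_t$ denotes the number of balls in bin $i$ at time $t$. For every fixed $K\in\mathbb{N}$ there is a constant $C_{K,d}$ (independent of $t$) such that for all $t\ge1$, $$\Pr\big(\exists\, i\neq j:\ |N^{(i)}_t-N^{(j)}_t|\le K\big)\le\frac{C_{K,d}}{\sqrt t}.$$ *)

From HB Require Import structures.
From mathcomp Require Import all_boot all_order all_algebra.
From mathcomp Require Import reals.
Set Implicit Arguments. Unset Strict Implicit. Unset Printing Implicit Defensive.
Import Order.TTheory GRing.Theory Num.Theory.

(* The first t steps of the balls-in-bins process with d bins:
   w s = bin chosen at time s+1 (s : 'I_t). Under the process, the law of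
   these t choices is uniform on {ffun 'I_t -> 'I_d}. *)

Definition bin_count (d t : nat) (w : {ffun 'I_t -> 'I_d}) (i : 'I_d) : nat :=
  #|[set s : 'I_t | w s == i]|.

Definition close_pair_event (d t K : nat) : {set {ffun 'I_t -> 'I_d}} :=
  [set w | [exists i : 'I_d, exists j : 'I_d,
     (i != j) && (absz (Posz (bin_count w i) - Posz (bin_count w j))%R <= K)%N]].

Definition unif_prob (R : numFieldType) (d t : nat)
    (A : {set {ffun 'I_t -> 'I_d}}) : R :=
  (#|A|%:R) / ((d ^ t)%N%:R).

(* Fix bins i <> j and give a ball weight 2 in bin i, 0 in bin j and 1 elsewhere.
   A word then has weight t + N_i - N_j, and the generating function of the
   weight is (X^2 + (d-2) X + 1)^t.  Expanding it: among the C(t,k) (d-2)^(t-k)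
   ways to place the balls outside {i, j}, the k remaining ones split as
   (a, k - a) in C(k, a) <= C(k, k/2) <= 2^k / sqrt(k+1) ways, and |2a - k| <= K
   holds for at most K + 1 values of a.  By AM-GM,
   2 sqrt(t+1) / sqrt(k+1) <= (t+1)/(k+1) + 1, and (t+1) C(t,k) = (k+1) C(t+1,k+1)
   turns both resulting sums into binomial expansions of powers of d, so a pair
   is close for at most (K+1) d^(t+1) / sqrt(t+1) words.  A union bound over the
   d^2 pairs ends the proof. *)

From HB Require Import structures.
From mathcomp Require Import all_boot all_order all_algebra.
From mathcomp Require Import reals.
From mathcomp Require Import zify ring lra.
Import Order.TTheory GRing.Theory Num.Theory.
Set Implicit Arguments. Unset Strict Implicit. Unset Printing Implicit Defensive.

Lemma leq_bin_succ k a : a.*2 < k -> 'C(k, a) <= 'C(k, a.+1).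
Proof.
move=> lt_2a_k; rewrite -(leq_pmul2l (ltn0Sn a)) mul_bin_left.
by rewrite leq_mul2r; apply/orP; right; lia.
Qed.

Lemma leq_bin_half k a : 'C(k, a) <= 'C(k, k./2).
Proof.
have k_halves := odd_double_half k.
have up b : b <= k./2 -> 'C(k, k./2 - b) <= 'C(k, k./2).
  elim: b => [|b IHb] le_b; first by rewrite subn0.
  apply: leq_trans (IHb (ltnW le_b)); rewrite -[in leqRHS](subnSK le_b).
  apply: leq_bin_succ; lia.
case: (leqP a k./2) => [le_a | lt_a]; first by rewrite -(subKn le_a) up ?leq_subr.
case: (leqP a k) => [le_ak | lt_ka]; last by rewrite bin_small.
rewrite -bin_sub // -[k - a](subKn (_ : k - a <= k./2)) ?up ?leq_subr //; lia.
Qed.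

Lemma binS_central n : 'C(n.*2.+2, n.+1) = 2 * 'C(n.*2.+1, n).
Proof.
rewrite binS -[in 'C(_, n.+1)]bin_sub; last by rewrite -addnn ltnS leq_addl.
by rewrite -addnn subSS addnK mul2n addnn.
Qed.

Lemma mul_bin_central_succ n :
  n.+1 * 'C(n.*2.+2, n.+1) = 2 * n.*2.+1 * 'C(n.*2, n).
Proof.
have down := mul_bin_down n.*2.+1 n; rewrite /= in down.
rewrite binS_central -mulnA down mulnCA; congr (_ * (_ * _)); lia.
Qed.

Lemma central_bin_sqr_bound n : 'C(n.*2, n) ^ 2 * n.*2.+1 <= 16 ^ n.
Proof.
elim: n => [|n IHn]; first by rewrite bin0.
rewrite doubleS -(@leq_pmul2l (n.+1 ^ 2)) ?expn_gt0 // mulnA -expnMn.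
rewrite mul_bin_central_succ.
set c := 'C(n.*2, n) in IHn *.
have -> : (2 * n.*2.+1 * c) ^ 2 * n.*2.+3 = 4 * n.*2.+1 * n.*2.+3 * (c ^ 2 * n.*2.+1).
  by rewrite !expnMn; ring.
apply: (@leq_trans (16 * n.+1 ^ 2 * (c ^ 2 * n.*2.+1))).
  by rewrite leq_mul2r; apply/orP; right; nia.
by rewrite (expnS 16) [in leqRHS]mulnCA -mulnA !leq_mul2l IHn !orbT.
Qed.

Lemma sqr_bin_half_bound k : 'C(k, k./2) ^ 2 * k.+1 <= 4 ^ k.
Proof.
have := odd_double_half k; move: (k./2) (odd k) => n [] <-; rewrite ?add1n ?add0n.
  have := central_bin_sqr_bound n.+1.
  rewrite doubleS binS_central expnMn (expnS 16) -mulnA -[16]/(4 * 4) -mulnA leq_pmul2l //.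
  rewrite (expnS 4) -mul2n expnM.
  by apply: leq_trans; rewrite leq_mul2l leqnSn orbT.
by rewrite -mul2n expnM mul2n central_bin_sqr_bound.
Qed.

Lemma sum_ord_interval N lo hi :
  \sum_(a < N) (lo <= a <= hi) = minn N hi.+1 - lo.
Proof.
elim: N => [|N IHN]; first by rewrite big_ord0 min0n.
by rewrite big_ord_recr /= IHN; case: (leqP lo N); case: (leqP N hi); lia.
Qed.

Lemma sum_ord_window N k K :
  \sum_(a < N) ((k <= a.*2 + K) && (a.*2 <= k + K)) <= K.+1.
Proof.
rewrite (eq_bigr (fun a : 'I_N => ((k - K).+1 %/ 2 <= a <= (k + K) %/ 2) : nat)).
  by rewrite sum_ord_interval; lia.
move=> a _; congr nat_of_bool; apply/andP/andP; case; split; lia.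
Qed.

Lemma sum_bin_shift_le c t :
  \sum_(k < t.+1) ('C(t.+1, k.+1) + 'C(t, k)) * c ^ (t - k) * 2 ^ k <= (c + 2) ^ t.+1.
Proof.
have shifted : 2 * \sum_(k < t.+1) 'C(t.+1, k.+1) * c ^ (t - k) * 2 ^ k <= (c + 2) ^ t.+1.
  rewrite big_distrr expnDn [in leqRHS]big_ord_recl /=; apply: leq_trans (leq_addl _ _).
  by apply: eq_leq; apply: eq_bigr => k _; rewrite subSS expnS; ring.
have plain : \sum_(k < t.+1) 'C(t, k) * c ^ (t - k) * 2 ^ k = (c + 2) ^ t.
  by rewrite expnDn; apply: eq_bigr => k _; rewrite mulnA.
have grow : 2 * (c + 2) ^ t <= (c + 2) ^ t.+1 by rewrite expnS leq_mul2r leq_addl orbT.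
under eq_bigr do rewrite mulnDl mulnDl.
rewrite big_split /= plain; move: shifted grow.
set X := \sum_(k < _) _; set P := (c + 2) ^ t; set Z := (c + 2) ^ t.+1; lia.
Qed.

Lemma leq_card_bigcup (I T : finType) (P : pred I) (A : I -> {set T}) :
  #|\bigcup_(i | P i) A i| <= \sum_(i | P i) #|A i|.
Proof.
elim/big_rec2: _ => [|i B n _ IH]; first by rewrite cards0.
by apply: leq_trans (leq_card_setU _ _) _; rewrite leq_add2l.
Qed.

(* The number of words over c + 2 letters in which the first special letter
   occurs exactly (k / 2) times, k being the number of special letters. *)
Definition balanced_words c t :=
  \sum_(k < t.+1) 'C(t, k) * c ^ (t - k) * 'C(k, k./2).

Local Open Scope ring_scope.

Lemma sum_ffun_Xn_weight (R : comNzSemiRingType) (T : finType) (e : T -> nat) t :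
  \sum_(w : {ffun 'I_t -> T}) ('X^(\sum_(s < t) e (w s)) : {poly R}) =
  (\sum_(c : T) 'X^(e c)) ^+ t.
Proof.
under eq_bigr do rewrite expr_sum.
by rewrite -[in RHS](card_ord t) -prodr_const bigA_distr_bigA.
Qed.

Lemma exprX_trinomial (R : comNzSemiRingType) c t :
  ('X *+ c + ('X^2 + 1)) ^+ t = \sum_(k < t.+1) \sum_(a < k.+1)
     ('X^(a.*2 + (t - k)) : {poly R}) *+ ('C(t, k) * c ^ (t - k) * 'C(k, a)).
Proof.
rewrite exprDn; apply: eq_bigr => k _.
rewrite exprMn_n exprD1n mulr_sumr -sumrMnl; apply: eq_bigr => a _.
rewrite mulrnAl mulrnAr -exprM -exprD -!mulrnA.
by congr (_ ^+ _ *+ _); lia.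
Qed.

Lemma sum_coefXn (R : nzSemiRingType) N (f : nat -> R) m : (m < N)%N ->
  \sum_(n < N) f n * ('X^m : {poly R})`_n = f m.
Proof.
move=> lt_mN; rewrite (eq_bigr (fun n : 'I_N => if n == m :> nat then f n else 0)).
  by rewrite -big_mkcond big_ord1_eq lt_mN.
by move=> n _; rewrite coefXn; case: eqP; rewrite ?mulr1 ?mulr0.
Qed.

Local Close Scope ring_scope.

Section PairWeight.
Variables (d t : nat) (i j : 'I_d).
Hypothesis neq_ij : i != j.

Definition pair_weight (c : 'I_d) : nat :=
  if c == i then 2 else if c == j then 0 else 1.

Definition word_weight (w : {ffun 'I_t -> 'I_d}) : nat :=
  \sum_(s < t) pair_weight (w s).

Lemma bin_countE (w : {ffun 'I_t -> 'I_d}) c : bin_count w c = \sum_(s < t) (w s == c).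
Proof.
rewrite /bin_count -sum1_card big_mkcond; apply: eq_bigr => s _.
by rewrite inE; case: (w s == c).
Qed.

Lemma word_weightE w : word_weight w + bin_count w j = t + bin_count w i.
Proof.
rewrite !bin_countE -[X in _ = X + _](card_ord t) -sum1_card -!big_split /=.
apply: eq_bigr => s _; rewrite /pair_weight.
by case: eqP => [->|_]; [rewrite (negbTE neq_ij) | case: eqP].
Qed.

Lemma word_weight_le w : word_weight w <= t.*2.
Proof.
rewrite -muln2 -[in leqRHS](card_ord t) -sum_nat_const; apply: leq_sum => s _.
by rewrite /pair_weight; case: ifP => //; case: ifP.
Qed.

Lemma sum_Xn_pair_weight :
  (\sum_c 'X^(pair_weight c) = 'X *+ (d - 2) + ('X^2 + 1) :> {poly nat})%R.
Proof.
rewrite (bigD1 i) //= (bigD1 j) 1?eq_sym //= /pair_weight eqxx eq_sym (negbTE neq_ij) eqxx.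
rewrite expr0 addrA addrC; congr (_ + _)%R.
rewrite (eq_bigr (fun _ => 'X)%R); last by move=> c /andP[/negbTE -> /negbTE ->].
rewrite sumr_const; congr (_ *+ _)%R.
rewrite -[d in RHS]card_ord [#|'I_d|](cardD1 i) [#|[predD1 _ & i]|](cardD1 j).
rewrite !inE eq_sym neq_ij add1n add1n subn2 /=.
by apply: eq_card => c; rewrite !inE andbC andbT.
Qed.

Lemma sum_word_weight (f : nat -> nat) :
  \sum_(w : {ffun 'I_t -> 'I_d}) f (word_weight w) =
  \sum_(k < t.+1) \sum_(a < k.+1)
     'C(t, k) * (d - 2) ^ (t - k) * 'C(k, a) * f (a.*2 + (t - k)).
Proof.
(* Weights are at most 2t, so pairing coefficients with f up to degree 2t suffices. *)
pose pairing (p : {poly nat}) := \sum_(n < t.*2.+1) f n * (p`_n)%R.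
have pairingD p q : pairing (p + q)%R = pairing p + pairing q.
  by rewrite -big_split; apply: eq_bigr => n _; rewrite coefD mulnDr.
have pairing0 : pairing 0%R = 0 by rewrite /pairing big1 // => n _; rewrite coef0 muln0.
have pairingXn m c : m <= t.*2 -> pairing ('X^m *+ c)%R = f m * c.
  move=> le_m; rewrite /pairing; under eq_bigr do rewrite coefMn -mulr_natr natn natrME mulnA.
  by rewrite -big_distrl /= sum_coefXn.
transitivity (pairing (\sum_(w : {ffun 'I_t -> 'I_d}) 'X^(word_weight w))%R).
  rewrite (big_morph pairing pairingD pairing0); apply: eq_bigr => w _.
  by rewrite -[X in pairing X]mulr1n pairingXn ?word_weight_le ?muln1.
rewrite sum_ffun_Xn_weight sum_Xn_pair_weight exprX_trinomial.
rewrite (big_morph pairing pairingD pairing0); apply: eq_bigr => k _.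
rewrite (big_morph pairing pairingD pairing0); apply: eq_bigr => a _.
rewrite pairingXn 1?mulnC //; have := ltn_ord a; have := ltn_ord k; lia.
Qed.

Definition close_pair (K : nat) : {set {ffun 'I_t -> 'I_d}} :=
  [set w | absz (Posz (bin_count w i) - Posz (bin_count w j))%R <= K].

Lemma card_close_pair K : #|close_pair K| <= K.+1 * balanced_words (d - 2) t.
Proof.
have -> : #|close_pair K| =
    \sum_w ((t <= word_weight w + K) && (word_weight w <= t + K) : nat).
  rewrite -sum1_card big_mkcond; apply: eq_bigr => w _; rewrite inE.
  have := word_weightE w; move: (word_weight w) => m eq_m.
  by congr nat_of_bool; apply/idP/andP; [split; lia | lia].
rewrite (sum_word_weight (fun m => (t <= m + K) && (m <= t + K) : nat)).
rewrite /balanced_words big_distrr /=.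
apply: leq_sum => k _.
apply: (@leq_trans (\sum_(a < k.+1) 'C(t, k) * (d - 2) ^ (t - k) * 'C(k, k./2) *
                      ((k <= a.*2 + K) && (a.*2 <= k + K)))).
  apply: leq_sum => a _; apply: leq_mul; first by rewrite leq_mul2l leq_bin_half orbT.
  by have := ltn_ord k; case: andP; case: andP => //; lia.
by rewrite -big_distrr /= [leqRHS]mulnC leq_mul2l sum_ord_window orbT.
Qed.

End PairWeight.

Lemma card_close_pair_event d t K :
  #|close_pair_event d t K| <= d ^ 2 * K.+1 * balanced_words (d - 2) t.
Proof.
have cover : close_pair_event d t K \subset
    \bigcup_(p : 'I_d * 'I_d | p.1 != p.2) close_pair t p.1 p.2 K.
  apply/subsetP => w; rewrite inE => /existsP[i /existsP[j /andP[neq_ij close_ij]]].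
  by apply/bigcupP; exists (i, j) => //; rewrite inE.
apply: leq_trans (subset_leq_card cover) _; apply: leq_trans (leq_card_bigcup _ _) _.
apply: (@leq_trans (\sum_(p : 'I_d * 'I_d) K.+1 * balanced_words (d - 2) t)).
  by rewrite big_mkcond; apply: leq_sum => p _; case: ifP => // /card_close_pair.
by rewrite sum_nat_const card_prod card_ord mulnA.
Qed.

Local Open Scope ring_scope.

Lemma le_amgm_weighted (R : realFieldType) (x y s m : R) :
  0 < y -> 0 <= m -> m * x ^+ 2 <= y ^+ 2 -> 2 * x * s * m <= y * (s ^+ 2 + m).
Proof.
move=> y_gt0 m_ge0 le_mx2_y2.
have : 0 <= y * (y * (s ^+ 2 + m) - 2 * x * s * m).
  have -> : y * (y * (s ^+ 2 + m) - 2 * x * s * m) =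
            m * (x * s - y) ^+ 2 + s ^+ 2 * (y ^+ 2 - m * x ^+ 2) by ring.
  by apply: addr_ge0; apply: mulr_ge0; rewrite ?sqr_ge0 ?subr_ge0.
by rewrite pmulr_rge0 // subr_ge0.
Qed.

Lemma bin_half_sqrt_le (R : rcfType) k (T : R) : 0 <= T ->
  2 * ('C(k, k./2))%:R * Num.sqrt T * k.+1%:R <= (2 ^ k)%:R * (T + k.+1%:R).
Proof.
move=> T_ge0; rewrite -{2}(sqr_sqrtr T_ge0); apply: le_amgm_weighted => //.
  by rewrite ltr0n expn_gt0.
have sqr_pow2 : ((2 ^ k) ^ 2 = 4 ^ k)%N by rewrite -expnM mulnC expnM.
by rewrite -!natrX -natrM ler_nat sqr_pow2 mulnC sqr_bin_half_bound.
Qed.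

Lemma balanced_words_sqrt_le (R : rcfType) c t :
  2 * (balanced_words c t)%:R * Num.sqrt (t.+1%:R : R) <= ((c + 2) ^ t.+1)%:R.
Proof.
apply: (@le_trans _ _
  ((\sum_(k < t.+1) ('C(t.+1, k.+1) + 'C(t, k)) * c ^ (t - k) * 2 ^ k)%N%:R));
  last by rewrite ler_nat sum_bin_shift_le.
rewrite /balanced_words !natr_sum mulr_sumr mulr_suml; apply: ler_sum => k _.
have m_gt0 : (0 : R) < k.+1%:R by rewrite ltr0n.
rewrite -(ler_pM2r m_gt0).
have := bin_half_sqrt_le k (ler0n R t.+1).
have := congr1 (fun n => n%:R : R) (mul_bin_diag t.+1 k); rewrite /= !natrM natrD.
set b := 'C(t, k)%:R; set b' := 'C(t.+1, k.+1)%:R; set p := (c ^ (t - k))%:R.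
set q := (2 ^ k)%:R; set x := 'C(k, k./2)%:R; set T := t.+1%:R; set m := k.+1%:R.
set s := Num.sqrt T => diag le_x.
have b_ge0 : 0 <= b by rewrite ler0n.
have p_ge0 : 0 <= p by rewrite ler0n.
have -> : 2 * (b * p * x) * s * m = b * p * (2 * x * s * m) by ring.
have -> : (b' + b) * p * q * m = p * q * (m * b' + b * m) by ring.
rewrite -diag.
have -> : p * q * (T * b + b * m) = b * p * (q * (T + m)) by ring.
by rewrite ler_wpM2l ?mulr_ge0.
Qed.

Theorem lemma4p10 (R : realType) (d : nat) (hd : (2 <= d)%N) (K : nat) :
  exists C : R, forall t : nat, (1 <= t)%N ->
    unif_prob R (close_pair_event d t K) <= C / Num.sqrt (t%:R).
Proof.
exists (d ^ 3 * K.+1)%:R => t t_gt0.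
have dt_gt0 : 0 < (d ^ t)%:R :> R by rewrite ltr0n expn_gt0; case: d hd.
have s_gt0 : 0 < Num.sqrt t%:R :> R by rewrite sqrtr_gt0 ltr0n.
have s_le : Num.sqrt t%:R <= Num.sqrt t.+1%:R :> R by rewrite ler_sqrt ?ler0n ?ler_nat.
have count := card_close_pair_event d t K.
have balanced := balanced_words_sqrt_le R (d - 2) t; rewrite subnK // in balanced.
rewrite /unif_prob ler_pdivrMr // mulrAC ler_pdivlMr //.
apply: (@le_trans _ _ ((d ^ 2 * K.+1 * balanced_words (d - 2) t)%:R * Num.sqrt t.+1%:R)).
  by apply: ler_pM; rewrite ?ler0n ?sqrtr_ge0 ?ler_nat.
have -> : (d ^ 3 * K.+1)%:R * (d ^ t)%:R = (d ^ 2 * K.+1)%:R * (d ^ t.+1)%:R :> R.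
  by rewrite -!natrM (expnS d t) (expnS d 2); congr _%:R; ring.
rewrite [(_ * balanced_words _ _)%:R]natrM -mulrA ler_wpM2l //.
have : 0 <= (balanced_words (d - 2) t)%:R * Num.sqrt t.+1%:R :> R.
  by rewrite mulr_ge0 ?ler0n ?sqrtr_ge0.
lra.
Qed.
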